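(* Let $\mathbf G$ and $\mathbf H$ be power-associative loops. Then $\mathcal G(\mathbf G)\cong\mathcal G(\mathbf H)$ if and only if $\mathcal G^{\pm}(\mathbf G)\cong\mathcal G^{\pm}(\mathbf H)$.
   Context: A loop is power-associative if every subloop generated by one element is a group; powers $x^n$ are computed in $\langle x\rangle$. The power graph $\mathcal G(\mathbf G)$ has vertex set $G$, distinct $x,y$ adjacent iff $y=x^n$ or $x=y^n$ for some $n\in\mathbb Z$. The $Z^\pm$-power graph $\mathcal G^{\pm}(\mathbf G)$ has vertex set $G$, distinct $x,y$ adjacent iff $y=x^n$ or $x=y^n$ for some $n\in\mathbb Z\setminus\{0\}$. Isomorphism means isomorphism of simple graphs. *)

(* loops may be infinite, so we use an arbitrary carrier Type. *)
From Stdlib Require Import ZArith.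

(* A loop, in the standard equational (quasigroup-with-identity) form:
   left/right divisions make  a * x = b  and  y * a = b  uniquely solvable. *)
Record loop := Loop {
  carrier :> Type;
  lmul : carrier -> carrier -> carrier;
  lone : carrier;
  lldiv : carrier -> carrier -> carrier;
  lrdiv : carrier -> carrier -> carrier;
  lmul1x : forall x, lmul lone x = x;
  lmulx1 : forall x, lmul x lone = x;
  lmul_ldiv : forall a b, lmul a (lldiv a b) = b;
  lldiv_mul : forall a b, lldiv a (lmul a b) = b;
  lrdiv_mul : forall a b, lmul (lrdiv b a) a = b;
  lmul_rdiv : forall a b, lrdiv (lmul b a) a = b
}.

Inductive gen1 (L : loop) (x : L) : L -> Prop :=
| gen1_x : gen1 L x x
| gen1_mul a b : gen1 L x a -> gen1 L x b -> gen1 L x (lmul L a b)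
| gen1_ldiv a b : gen1 L x a -> gen1 L x b -> gen1 L x (lldiv L a b)
| gen1_rdiv a b : gen1 L x a -> gen1 L x b -> gen1 L x (lrdiv L b a).

(* Power-associative: every one-generated subloop is a group, i.e. the
   multiplication is associative on it (it is already a loop). *)
Definition power_associative (L : loop) : Prop :=
  forall x a b c, gen1 L x a -> gen1 L x b -> gen1 L x c ->
    lmul L (lmul L a b) c = lmul L a (lmul L b c).

Fixpoint npow (L : loop) (x : L) (n : nat) : L :=
  match n with
  | O => lone L
  | S m => lmul L (npow L x m) x
  end.

Definition zpow (L : loop) (x : L) (z : Z) : L :=
  match z with
  | Z0 => lone L
  | Zpos p => npow L x (Pos.to_nat p)
  | Zneg p => lrdiv L (lone L) (npow L x (Pos.to_nat p))
  end.

Definition power_adj (L : loop) (x y : L) : Prop :=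
  x <> y /\ exists n : Z, y = zpow L x n \/ x = zpow L y n.

Definition pm_power_adj (L : loop) (x y : L) : Prop :=
  x <> y /\ exists n : Z, n <> 0%Z /\ (y = zpow L x n \/ x = zpow L y n).

Definition graph_iso {A B : Type} (EA : A -> A -> Prop) (EB : B -> B -> Prop) : Prop :=
  exists (f : A -> B) (g : B -> A),
    (forall a, g (f a) = a) /\ (forall b, f (g b) = b) /\
    (forall a1 a2, EA a1 a2 <-> EB (f a1) (f a2)).

From Stdlib Require Import ZArith Lia Classical ClassicalEpsilon.
Open Scope Z_scope.

(* The two graphs differ only at the identity 1: in the power graph it is adjacent to every
   vertex, in the Z^{+-}-power graph exactly to the nontrivial torsion elements, and off 1 the
   adjacencies agree.  In both graphs 1 is adjacent to its whole connected component, so once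
   an isomorphism is known to send 1 to a vertex adjacent to 1, composing it with the exchange
   of these two twins yields an isomorphism fixing 1; such an isomorphism transfers between the
   two graphs as soon as it preserves torsion.
   Both remaining facts come from counting twins (vertices with the same closed
   neighbourhood): a non-torsion v has the single twin v^-1, whereas all generators of a
   finite cyclic group are twins of one another.  An isomorphism of power graphs fixing 1 and
   sending a torsion x to a non-torsion element would force every element near x to have
   order 3, which the images of y^2 and y^4 (y = f x) contradict; an isomorphism of
   Z^{+-}-power graphs sending 1 to a non-torsion c makes 1 have a unique twin e, the square of
   every other torsion element, contradicted by the images of c^2, c^4 and c^8. *)

Section PowerAssociativeLoop.
Variable L : loop.
Hypothesis PA : power_associative L.
Local Notation mul := (lmul L).
Local Notation one := (lone L).
Local Notation zp := (zpow L).

Lemma lmul_cancel_r a b c : mul a c = mul b c -> a = b.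
Proof. intro E. rewrite <- (lmul_rdiv L c a), <- (lmul_rdiv L c b), E. reflexivity. Qed.

Lemma lrdiv_unique u a b : mul u a = b -> u = lrdiv L b a.
Proof. intros <-. rewrite lmul_rdiv. reflexivity. Qed.

Lemma gen1_one x : gen1 L x one.
Proof.
  rewrite <- (lldiv_mul L x one), lmulx1 at 1.
  apply gen1_ldiv; constructor.
Qed.

Lemma gen1_npow x n : gen1 L x (npow L x n).
Proof. induction n; simpl; auto using gen1_one, gen1_mul, gen1_x. Qed.

Lemma gen1_inv x a : gen1 L x a -> gen1 L x (lrdiv L one a).
Proof. intro. apply gen1_rdiv; auto using gen1_one. Qed.

Lemma gen1_zpow x z : gen1 L x (zp x z).
Proof. destruct z; simpl; auto using gen1_one, gen1_npow, gen1_inv. Qed.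

Local Hint Resolve gen1_x gen1_one gen1_npow gen1_inv gen1_zpow gen1_mul : core.

Lemma lmul_rinv x a : gen1 L x a -> mul a (lrdiv L one a) = one.
Proof.
  intro Ha. apply (lmul_cancel_r _ _ a).
  rewrite (PA x), lrdiv_mul, lmulx1, lmul1x; auto.
Qed.

Lemma npow_mulC x n : mul (npow L x n) x = mul x (npow L x n).
Proof.
  induction n as [|n IHn]; simpl.
  - rewrite lmul1x, lmulx1. reflexivity.
  - rewrite <- (PA x), <- IHn; auto.
Qed.

Lemma zpow_succ x z : zp x (Z.succ z) = mul (zp x z) x.
Proof.
  destruct z as [|p|p].
  - reflexivity.
  - change (Z.succ (Zpos p)) with (Zpos p + 1). rewrite <- Pos2Z.inj_add.
    unfold zpow. rewrite Pos.add_1_r, Pos2Nat.inj_succ. reflexivity.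
  - destruct (Pos.succ_pred_or p) as [->|Hp].
    + simpl. rewrite lmul1x, lrdiv_mul. reflexivity.
    + rewrite <- Hp.
      replace (Z.succ (Zneg (Pos.succ (Pos.pred p)))) with (Zneg (Pos.pred p)) by lia.
      unfold zpow. rewrite Pos2Nat.inj_succ. simpl.
      set (a := npow L x (Pos.to_nat (Pos.pred p))).
      symmetry. apply lrdiv_unique.
      unfold a. rewrite npow_mulC, (PA x), lrdiv_mul; auto.
Qed.

Lemma zpow_pred x z : zp x (Z.pred z) = mul (zp x z) (lrdiv L one x).
Proof.
  rewrite <- (Z.succ_pred z) at 2.
  rewrite zpow_succ, (PA x), (lmul_rinv x), lmulx1; auto.
Qed.

Lemma zpow_add x a b : zp x (a + b) = mul (zp x a) (zp x b).
Proof.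
  induction b using Z.peano_ind.
  - rewrite Z.add_0_r. simpl. rewrite lmulx1. reflexivity.
  - rewrite Z.add_succ_r, !zpow_succ, IHb, (PA x); auto.
  - rewrite Z.add_pred_r, !zpow_pred, IHb, (PA x); auto.
Qed.

Lemma zpow1 x : zp x 1 = x.
Proof. apply lmul1x. Qed.

Lemma zpow_mul x a b : zp (zp x a) b = zp x (a * b).
Proof.
  induction b using Z.peano_ind.
  - rewrite Z.mul_0_r. reflexivity.
  - rewrite Z.mul_succ_r, zpow_succ, IHb, zpow_add. reflexivity.
  - rewrite Z.mul_pred_r, zpow_pred, IHb.
    replace (lrdiv L one (zp x a)) with (zp x (- a)).
    + rewrite <- zpow_add. reflexivity.
    + apply lrdiv_unique. rewrite <- zpow_add, Z.add_opp_diag_l. reflexivity.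
Qed.

Lemma zpow_one n : zp one n = one.
Proof. exact (zpow_mul one 0 n). Qed.

Lemma zpow_invK x : zp (zp x (-1)) (-1) = x.
Proof. rewrite zpow_mul. apply zpow1. Qed.

Lemma zpow_eq_one_sub x a b : zp x a = zp x b -> zp x (a - b) = one.
Proof.
  intro E. apply (lmul_cancel_r _ _ (zp x b)).
  rewrite <- zpow_add, lmul1x, Z.sub_add. exact E.
Qed.

Lemma zpow_mod x n k : zp x n = one -> 0 < n -> zp x k = zp x (k mod n).
Proof.
  intros E Hn. rewrite (Z.div_mod k n) at 1 by lia.
  rewrite zpow_add, <- zpow_mul, E, zpow_one, lmul1x. reflexivity.
Qed.

Definition torsion x := exists n, n <> 0 /\ zp x n = one.
Definition comparable x y := exists n, n <> 0 /\ (y = zp x n \/ x = zp y n).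

Lemma comparable_sym x y : comparable x y -> comparable y x.
Proof. intros (n & Hn & E). exists n. tauto. Qed.

Lemma torsion_comparable x y : comparable x y -> torsion x -> torsion y.
Proof.
  intros (k & Hk & [Ey|Ex]) (n & Hn & E).
  - exists n. split; auto. rewrite Ey, zpow_mul, Z.mul_comm, <- zpow_mul, E. apply zpow_one.
  - exists (k * n). split; [lia|]. rewrite <- zpow_mul, <- Ex. exact E.
Qed.

Lemma torsion_one : torsion one.
Proof. exists 1. split; [lia|]. apply zpow_one. Qed.

Lemma zpow_inj v a b : ~ torsion v -> zp v a = zp v b -> a = b.
Proof.
  intros Hv E. apply zpow_eq_one_sub in E.
  destruct (Z.eq_dec (a - b) 0); [lia|]. exfalso. apply Hv. exists (a - b). auto.
Qed.

Lemma nontorsion_inv_neq v : ~ torsion v -> v <> zp v (-1).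
Proof. intros Hv E. rewrite <- (zpow1 v) in E at 1. apply zpow_inj in E; auto. lia. Qed.

Lemma zpow_inv_neq_one w : w <> one -> zp w (-1) <> one.
Proof. intros Hw E. apply Hw. rewrite <- (zpow_invK w), E. apply zpow_one. Qed.

Lemma zpow_inv_id w : zp w (-1) = w <-> zp w 2 = one.
Proof.
  split; intro E.
  - replace 2 with (1 - -1) by lia. apply zpow_eq_one_sub. rewrite E, zpow1. reflexivity.
  - rewrite <- (zpow1 w) at 2. replace 1 with (2 + -1) by lia.
    rewrite zpow_add, E, lmul1x. reflexivity.
Qed.

Lemma torsion_pos w : torsion w -> exists N : nat, (1 <= N)%nat /\ zp w (Z.of_nat N) = one.
Proof.
  intros (n & Hn & E). destruct (Z_lt_le_dec 0 n).
  - exists (Z.to_nat n). rewrite Z2Nat.id by lia. split; [lia | exact E].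
  - exists (Z.to_nat (- n)). rewrite Z2Nat.id by lia. split; [lia|].
    replace (- n) with (n * -1) by lia. rewrite <- zpow_mul, E. apply zpow_one.
Qed.

Lemma zpow_order2 v k : zp v 2 = one -> zp v k = one \/ zp v k = v.
Proof.
  intro E. rewrite (zpow_mod v 2 k E) by lia.
  assert (0 <= k mod 2 < 2) by (apply Z.mod_pos_bound; lia).
  destruct (Z.eq_dec (k mod 2) 0) as [->|]; auto.
  replace (k mod 2) with 1 by lia. right. apply zpow1.
Qed.

Lemma zpow_order3 v k : zp v 3 = one -> zp v k = one \/ zp v k = v \/ zp v k = zp v (-1).
Proof.
  intro E. rewrite (zpow_mod v 3 k E) by lia.
  assert (0 <= k mod 3 < 3) by (apply Z.mod_pos_bound; lia).
  destruct (Z.eq_dec (k mod 3) 0) as [->|]; auto.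
  destruct (Z.eq_dec (k mod 3) 1) as [->|]; [rewrite zpow1; auto|].
  replace (k mod 3) with (3 + -1) by lia. rewrite zpow_add, E, lmul1x; auto.
Qed.

Lemma zpow_order4 v k : zp v 4 = one ->
  zp v k = one \/ zp v k = v \/ zp v k = zp v 2 \/ zp v k = zp v (-1).
Proof.
  intro E. rewrite (zpow_mod v 4 k E) by lia.
  assert (0 <= k mod 4 < 4) by (apply Z.mod_pos_bound; lia).
  destruct (Z.eq_dec (k mod 4) 0) as [->|]; auto.
  destruct (Z.eq_dec (k mod 4) 1) as [->|]; [rewrite zpow1; auto|].
  destruct (Z.eq_dec (k mod 4) 2) as [->|]; auto.
  replace (k mod 4) with (4 + -1) by lia. rewrite zpow_add, E, lmul1x; auto.
Qed.

Lemma comparable_order3 w u : zp w 3 = one -> zp u 3 = one -> comparable w u ->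
  w <> one -> u <> one -> u <> w -> u = zp w (-1).
Proof.
  intros Hw Hu (k & Hk & [E|E]) Hw1 Hu1 Huw.
  - destruct (zpow_order3 w k Hw) as [C|[C|C]]; congruence.
  - destruct (zpow_order3 u k Hu) as [C|[C|C]]; try congruence.
    rewrite E, C, zpow_invK. reflexivity.
Qed.

Lemma comparable_sqrt_involution a b e :
  zp a 2 = e -> zp b 2 = e -> zp e 2 = one -> comparable a b ->
  a <> one -> b <> one -> a <> e -> b <> e -> a <> b -> b = zp a (-1).
Proof.
  intros Ha Hb He (k & Hk & [E|E]) Ha1 Hb1 Hae Hbe Hab.
  - assert (A4 : zp a (2 * 2) = one) by (rewrite <- zpow_mul, Ha; exact He).
    destruct (zpow_order4 a k A4) as [C|[C|[C|C]]]; congruence.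
  - assert (B4 : zp b (2 * 2) = one) by (rewrite <- zpow_mul, Hb; exact He).
    destruct (zpow_order4 b k B4) as [C|[C|[C|C]]]; try congruence.
    rewrite E, C, zpow_invK. reflexivity.
Qed.
End PowerAssociativeLoop.

Definition twins {A : Type} (E : A -> A -> Prop) (a b : A) : Prop :=
  a <> b /\ E a b /\ forall w, w <> a -> w <> b -> (E w a <-> E w b).

Definition is_iso {A B : Type} (EA : A -> A -> Prop) (EB : B -> B -> Prop)
    (f : A -> B) (g : B -> A) : Prop :=
  (forall a, g (f a) = a) /\ (forall b, f (g b) = b) /\
  (forall a1 a2, EA a1 a2 <-> EB (f a1) (f a2)).

(* The closed neighbourhood of [a] is the whole connected component of [a]. *)
Definition component_center {A : Type} (E : A -> A -> Prop) (a : A) : Prop :=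
  forall x y, (x = a \/ E a x) -> E x y -> y = a \/ E a y.

Section GraphIsomorphisms.
Context {A B : Type} (EA : A -> A -> Prop) (EB : B -> B -> Prop).

Lemma is_iso_sym f g : is_iso EA EB f g -> is_iso EB EA g f.
Proof.
  intros (H1 & H2 & H3). split; [|split]; auto.
  intros b1 b2. rewrite H3, !H2. tauto.
Qed.

Lemma is_iso_twins f g a b : is_iso EA EB f g -> twins EA a b -> twins EB (f a) (f b).
Proof.
  intros (H1 & H2 & H3) (Hab & Eab & Hw). split; [|split].
  - intro E. apply Hab. rewrite <- (H1 a), <- (H1 b), E. reflexivity.
  - apply H3, Eab.
  - intros w Hwa Hwb. rewrite <- (H2 w), <- !H3.
    apply Hw; intros E; [apply Hwa | apply Hwb]; rewrite <- E, H2; reflexivity.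
Qed.

Lemma is_iso_component_center f g a :
  is_iso EA EB f g -> component_center EA a -> component_center EB (f a).
Proof.
  intros (H1 & H2 & H3) Ha x y Hx Exy.
  rewrite <- (H2 x), <- (H2 y), <- H3 in Exy.
  assert (Hgx : g x = a \/ EA a (g x)).
  { destruct Hx as [->|Hx]; [left; apply H1 | right; apply H3; rewrite H2; exact Hx]. }
  destruct (Ha (g x) (g y) Hgx Exy) as [E|E].
  - left. rewrite <- E, H2. reflexivity.
  - right. rewrite <- (H2 y). apply H3. exact E.
Qed.
End GraphIsomorphisms.

Section SymmetricGraphs.
Context {A : Type} (E : A -> A -> Prop).
Hypothesis E_sym : forall x y, E x y -> E y x.
Hypothesis E_irrefl : forall x, ~ E x x.

Lemma twins_sym a b : twins E a b -> twins E b a.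
Proof.
  intros (Hab & Eab & Hw). split; [|split]; auto.
  intros w Hwb Hwa. symmetry. auto.
Qed.

Lemma twins_trans a b c : twins E a b -> twins E b c -> a <> c -> twins E a c.
Proof.
  intros (Hab & Eab & Hw1) (Hbc & Ebc & Hw2) Hac. split; [|split]; auto.
  - apply (Hw2 a); auto.
  - intros w Hwa Hwc. destruct (classic (w = b)) as [->|Hwb].
    + split; auto.
    + rewrite (Hw1 w Hwa Hwb). auto.
Qed.

Lemma component_centers_twins a b :
  component_center E a -> component_center E b -> E a b -> twins E a b.
Proof.
  intros Ca Cb Eab. split; [|split]; auto.
  - intros ->. exact (E_irrefl _ Eab).
  - intros w Hwa Hwb. split; intro Ew.
    + destruct (Cb a w) as [|Ebw]; auto; contradiction.
    + destruct (Ca b w) as [|Eaw]; auto; contradiction.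
Qed.

Definition swap (p q y : A) : A :=
  if excluded_middle_informative (y = p) then q
  else if excluded_middle_informative (y = q) then p else y.

Lemma swap_cases p q y :
  (y = p /\ swap p q y = q) \/ (y = q /\ swap p q y = p) \/
  (y <> p /\ y <> q /\ swap p q y = y).
Proof.
  unfold swap. destruct (excluded_middle_informative (y = p)); auto.
  destruct (excluded_middle_informative (y = q)); auto.
Qed.

Lemma swapK p q y : p <> q -> swap p q (swap p q y) = y.
Proof.
  intro Hpq.
  destruct (swap_cases p q y) as [[H1 H2]|[[H1 H2]|(H1 & H0 & H2)]]; rewrite H2;
  destruct (swap_cases p q (swap p q y)) as [[K1 K2]|[[K1 K2]|(K1 & K0 & K2)]];
  congruence.
Qed.

Lemma swap_adj p q x y : twins E p q -> (E (swap p q x) (swap p q y) <-> E x y).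
Proof.
  intros (Hpq & Epq & Hw).
  destruct (swap_cases p q x) as [[H1 H2]|[[H1 H2]|(H1 & H0 & H2)]]; rewrite H2;
  destruct (swap_cases p q y) as [[K1 K2]|[[K1 K2]|(K1 & K0 & K2)]]; rewrite K2; subst;
  try (split; intro Z; exfalso; eapply E_irrefl; eassumption);
  try (split; intro; apply E_sym; assumption);
  try tauto.
  - specialize (Hw y K1 K0). split; intro; apply E_sym, Hw, E_sym; assumption.
  - specialize (Hw y K1 K0). split; intro; apply E_sym, Hw, E_sym; assumption.
  - symmetry. exact (Hw x H1 H0).
  - exact (Hw x H1 H0).
Qed.
End SymmetricGraphs.

Lemma is_iso_fix_center {A B : Type} (EA : A -> A -> Prop) (EB : B -> B -> Prop) f g a b :
  (forall x y, EB x y -> EB y x) -> (forall x, ~ EB x x) ->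
  is_iso EA EB f g -> component_center EA a -> component_center EB b ->
  f a = b \/ EB (f a) b ->
  exists f' g', is_iso EA EB f' g' /\ f' a = b.
Proof.
  intros Hsym Hirr Hiso Ca Cb [Hfa|Efab]; [exists f, g; auto|].
  assert (Htw : twins EB (f a) b)
    by (apply component_centers_twins; eauto using is_iso_component_center).
  pose proof Hiso as (H1 & H2 & H3).
  assert (Hpq : f a <> b) by apply Htw.
  exists (fun x => swap (f a) b (f x)), (fun y => g (swap (f a) b y)).
  split; [split; [|split]|].
  - intro x. rewrite swapK; auto.
  - intro y. rewrite H2, swapK; auto.
  - intros x1 x2. rewrite (swap_adj EB Hsym Hirr); auto.
  - destruct (swap_cases (f a) b (f a)) as [[_ K]|[[K _]|(K & _)]]; auto; congruence.
Qed.

Section PowerGraphs.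
Variable L : loop.
Hypothesis PA : power_associative L.
Local Notation one := (lone L).
Local Notation zp := (zpow L).
Local Notation pa := (power_adj L).
Local Notation pm := (pm_power_adj L).
Local Notation torsion := (torsion L).

Lemma power_adj_sym x y : pa x y -> pa y x.
Proof. intros (Hxy & n & E). split; auto. exists n. tauto. Qed.

Lemma pm_power_adj_sym x y : pm x y -> pm y x.
Proof. intros (Hxy & C). split; auto. apply comparable_sym, C. Qed.

Lemma power_adj_irrefl x : ~ pa x x.
Proof. intros [Hxx _]. auto. Qed.

Lemma pm_power_adj_irrefl x : ~ pm x x.
Proof. intros [Hxx _]. auto. Qed.

Lemma power_adj_one_l y : pa one y <-> y <> one.
Proof.
  split; [intros [Hy _]; auto|].
  intro Hy. split; auto. exists 0. right. reflexivity.
Qed.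

Lemma pm_power_adj_one_l y : pm one y <-> y <> one /\ torsion y.
Proof.
  split.
  - intros (Hy & n & Hn & [E|E]).
    + exfalso. apply Hy. rewrite E, zpow_one; auto.
    + split; [congruence|]. exists n. auto.
  - intros (Hy & n & Hn & E). split; [congruence|]. exists n. auto.
Qed.

Lemma power_adj_pm x y : x <> one -> y <> one -> (pa x y <-> pm x y).
Proof.
  intros Hx Hy. split.
  - intros (Hxy & n & E). split; auto. destruct (Z.eq_dec n 0) as [->|Hn].
    + destruct E; contradiction.
    + exists n. auto.
  - intros (Hxy & n & _ & E). split; auto. exists n. auto.
Qed.

Lemma pm_power_adj_torsion x y : pm x y -> torsion x -> torsion y.
Proof. intros [_ C]. apply torsion_comparable; auto. Qed.

Lemma pm_power_adj_iff x y :
  pm x y <-> pa x y /\ (x = one -> torsion y) /\ (y = one -> torsion x).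
Proof.
  split.
  - intros Pxy. split; [|split].
    + destruct Pxy as (Hxy & n & _ & E). split; auto. exists n. auto.
    + intros ->. apply (pm_power_adj_torsion one); auto using torsion_one.
    + intros ->. apply (pm_power_adj_torsion one); auto using torsion_one, pm_power_adj_sym.
  - intros (Pxy & Tx & Ty).
    destruct (classic (x = one)) as [->|Hx].
    { apply pm_power_adj_one_l. split; auto. apply power_adj_one_l, Pxy. }
    destruct (classic (y = one)) as [->|Hy].
    + apply pm_power_adj_sym, pm_power_adj_one_l. split; auto.
    + apply power_adj_pm; auto.
Qed.

Lemma power_adj_iff x y : pa x y <-> x <> y /\ (pm x y \/ x = one \/ y = one).
Proof.
  split.
  - intros Pxy. split; [apply Pxy|].
    destruct (classic (x = one)); auto. destruct (classic (y = one)); auto.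
    left. apply power_adj_pm; auto.
  - intros (Hxy & [(_ & n & _ & E) | [-> | ->]]).
    + split; auto. exists n. auto.
    + apply power_adj_one_l; auto.
    + apply power_adj_sym, power_adj_one_l; auto.
Qed.

Lemma power_adj_center : component_center pa one.
Proof.
  intros x y _ Pxy. destruct (classic (y = one)); auto.
  right. apply power_adj_one_l; auto.
Qed.

Lemma pm_power_adj_center : component_center pm one.
Proof.
  intros x y Hx Pxy.
  assert (Tx : torsion x).
  { destruct Hx as [->|Hx]; [apply torsion_one; auto | apply pm_power_adj_one_l, Hx]. }
  destruct (classic (y = one)); auto.
  right. apply pm_power_adj_one_l. split; auto. apply (pm_power_adj_torsion x); auto.
Qed.

Lemma twins_of_mutual_powers x z a b :
  x <> z -> z = zp x a -> x = zp z b -> a <> 0 -> b <> 0 -> twins pm x z.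
Proof.
  intros Hxz Hz Hx Ha Hb. split; [|split]; auto.
  - split; auto. exists a. auto.
  - intros w Hwx Hwz. split; intros (_ & n & Hn & [E|E]); split; auto.
    + exists (n * a). split; [lia|]. left. rewrite Hz, E, zpow_mul; auto.
    + exists (b * n). split; [lia|]. right. rewrite E, Hx, zpow_mul; auto.
    + exists (n * b). split; [lia|]. left. rewrite Hx, E, zpow_mul; auto.
    + exists (a * n). split; [lia|]. right. rewrite E, Hz, zpow_mul; auto.
Qed.

Lemma twins_inv x : x <> zp x (-1) -> twins pm x (zp x (-1)).
Proof.
  intro Hx. apply (twins_of_mutual_powers _ _ (-1) (-1)); auto; try lia.
  rewrite zpow_invK; auto.
Qed.

(* For [u = v^k] with [k <> 1, -1], the power [v^(k+1)] (or [v^3] when [k = -2]) is a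
   neighbour of [v] but not of [u]. *)
Lemma twins_nontorsion_zpow v k : ~ torsion v -> twins pm v (zp v k) -> k = -1.
Proof.
  intros Hv (Hvu & Pvu & Hw).
  assert (Hk0 : k <> 0).
  { intros ->. apply Hv, (pm_power_adj_one_l v), pm_power_adj_sym, Pvu. }
  assert (Hk1 : k <> 1) by (intros ->; rewrite zpow1 in Hvu; auto).
  destruct (Z.eq_dec k (-1)) as [|Hkm]; auto. exfalso.
  set (m := if Z.eq_dec k (-2) then 3 else k + 1).
  assert (Hm : m <> 0 /\ m <> 1 /\ m <> k) by (unfold m; destruct (Z.eq_dec k (-2)); lia).
  destruct Hm as (Hm0 & Hm1 & Hmk).
  assert (Hwv : zp v m <> v).
  { rewrite <- (zpow1 L v) at 2. intro E. apply zpow_inj in E; auto. }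
  assert (Hwu : zp v m <> zp v k) by (intro E; apply zpow_inj in E; auto).
  assert (Pwv : pm (zp v m) v) by (split; auto; exists m; split; auto).
  apply (Hw _ Hwv Hwu) in Pwv. destruct Pwv as (_ & n & Hn & [E|E]);
    rewrite zpow_mul in E; auto; apply zpow_inj in E; auto;
    unfold m in E; destruct (Z.eq_dec k (-2)); try lia.
  - assert (E' : (k + 1) * (1 - n) = 1) by lia. apply Z.eq_mul_1 in E'. lia.
  - assert (E' : k * (n - 1) = 1) by lia. apply Z.eq_mul_1 in E'. lia.
Qed.

Lemma twins_nontorsion v u : ~ torsion v -> twins pm v u -> u = zp v (-1).
Proof.
  intros Hv Htw. pose proof Htw as (_ & (_ & k & Hk & [E|E]) & _).
  - subst u. rewrite (twins_nontorsion_zpow v k); auto.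
  - assert (Hu : ~ torsion u).
    { intro T. apply Hv. apply (torsion_comparable L PA u); auto. exists k. auto. }
    subst v. apply twins_sym in Htw; auto using pm_power_adj_sym.
    rewrite (twins_nontorsion_zpow u k), zpow_invK; auto.
Qed.

Lemma twins_pm_power_adj x z : x <> one -> z <> one -> twins pm x z -> twins pa x z.
Proof.
  intros Hx Hz (Hxz & Exz & Hw). split; [|split]; auto.
  - apply power_adj_pm; auto.
  - intros w Hwx Hwz. destruct (classic (w = one)) as [->|Hw1].
    + rewrite !power_adj_one_l. tauto.
    + rewrite !power_adj_pm; auto.
Qed.

Lemma twins_power_adj_pm x z : ~ torsion x -> x <> one -> z <> one -> twins pa x z -> twins pm x z.
Proof.
  intros Hx Hx1 Hz1 (Hxz & Exz & Hw).
  assert (Pxz : pm x z) by (apply power_adj_pm; auto).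
  split; [|split]; auto.
  intros w Hwx Hwz. destruct (classic (w = one)) as [->|Hw1].
  - rewrite !pm_power_adj_one_l.
    assert (torsion z -> torsion x) by (apply pm_power_adj_torsion, pm_power_adj_sym; auto).
    tauto.
  - rewrite <- !power_adj_pm; auto.
Qed.
Lemma power_adj_comparable x y : x <> one -> y <> one -> pa x y -> comparable L x y.
Proof. intros Hx Hy P. apply power_adj_pm in P; auto. apply P. Qed.

Lemma twins_inv_power_adj w : w <> one -> zp w 2 <> one -> twins pa w (zp w (-1)).
Proof.
  intros Hw1 Hw2. apply twins_pm_power_adj, twins_inv; auto using zpow_inv_neq_one.
  intro E. apply Hw2, zpow_inv_id; auto.
Qed.
End PowerGraphs.

Section UniqueTwins.
Variable L : loop.
Hypothesis PA : power_associative L.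
Local Notation one := (lone L).
Local Notation zp := (zpow L).
Local Notation pa := (power_adj L).
Variable S : L -> Prop.
Hypothesis S_neq_one : forall w, S w -> w <> one.
Hypothesis S_torsion : forall w, S w -> torsion L w.
Hypothesis S_adj : forall w u, S w -> pa w u -> u <> one -> S u.
Hypothesis S_twin : forall w, S w -> exists z, z <> one /\ twins pa w z.
Hypothesis S_twins_unique : forall w z1 z2, S w -> twins pa w z1 -> twins pa w z2 ->
  z1 <> one -> z2 <> one -> z1 = z2.

Lemma unique_twin_sq_neq_one w : S w -> zp w 2 <> one.
Proof.
  intros Sw Ew. pose proof (S_neq_one w Sw) as Hw1.
  destruct (S_twin w Sw) as (z & Hz1 & Twz).
  pose proof Twz as (Hwz & Pwz & _).
  destruct (power_adj_comparable L w z Hw1 Hz1 Pwz) as (k & Hk & [E|E]).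
  - destruct (zpow_order2 L PA w k Ew); congruence.
  - assert (Sz : S z) by (apply (S_adj w); auto).
    destruct (classic (zp z 2 = one)) as [Ez|Ez].
    + destruct (zpow_order2 L PA z k Ez); congruence.
    + assert (Wz : w = zp z (-1)).
      { apply (S_twins_unique z); auto using zpow_inv_neq_one.
        - apply twins_sym; auto using power_adj_sym.
        - apply twins_inv_power_adj; auto. }
      apply Hwz. rewrite <- (proj2 (zpow_inv_id L PA w) Ew), Wz, zpow_invK; auto.
Qed.

Lemma unique_twin_inv w z : S w -> twins pa w z -> z <> one -> z = zp w (-1).
Proof.
  intros Sw Tz Hz1. pose proof (S_neq_one w Sw) as Hw1.
  apply (S_twins_unique w); auto using zpow_inv_neq_one.
  apply twins_inv_power_adj, unique_twin_sq_neq_one; auto.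
Qed.

(* Induction on an exponent [N] with [w^N = 1]: for even [N] the element [w^(N/2)] would be
   an involution in [S], for odd [N = 2M+1] the element [w^2] is a twin of [w]. *)
Lemma unique_twin_order3 w : S w -> zp w 3 = one.
Proof.
  intro Sw. destruct (torsion_pos L PA w (S_torsion w Sw)) as (N & HN & EN). revert w Sw EN.
  induction N as [N IH] using lt_wf_ind. intros w Sw EN.
  pose proof (S_neq_one w Sw) as Hw1. pose proof (unique_twin_sq_neq_one w Sw) as Hw2.
  destruct (Nat.Even_or_Odd N) as [[M HM]|[M HM]].
  - set (v := zp w (Z.of_nat M)).
    assert (Hv2 : zp v 2 = one).
    { unfold v. rewrite zpow_mul, <- EN by auto. f_equal. lia. }
    destruct (classic (v = one)) as [V1|V1]; [apply (IH M); auto; lia|].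
    destruct (classic (v = w)) as [Vw|Vw]; [rewrite <- Vw in Hw2; contradiction|].
    exfalso. apply (unique_twin_sq_neq_one v); auto.
    apply (S_adj w); auto.
    split; auto. exists (Z.of_nat M). left. reflexivity.
  - set (z := zp w 2).
    assert (Hwz : w = zp z (Z.of_nat M + 1)).
    { unfold z. rewrite zpow_mul by auto.
      replace (2 * (Z.of_nat M + 1)) with (Z.of_nat N + 1) by lia.
      rewrite zpow_add, EN, zpow1, lmul1x by auto. reflexivity. }
    assert (Hzw : w <> z).
    { intro E. apply Hw1. symmetry in E. unfold z in E. rewrite <- (zpow1 L w) in E at 2.
      apply zpow_eq_one_sub in E; auto. rewrite <- E, <- (zpow1 L w) at 1. reflexivity. }
    assert (Tz : twins pa w z).
    { apply twins_pm_power_adj; auto.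
      apply (twins_of_mutual_powers L PA w z 2 (Z.of_nat M + 1)); auto; lia. }
    pose proof (unique_twin_inv w z Sw Tz Hw2) as Ez.
    apply zpow_eq_one_sub in Ez; auto.
Qed.
End UniqueTwins.

Section PowerGraphIsomorphism.
Variables G H : loop.
Hypothesis PG : power_associative G.
Hypothesis PH : power_associative H.
Variables (f : G -> H) (g : H -> G).
Hypothesis f_iso : is_iso (power_adj G) (power_adj H) f g.
Hypothesis f_one : f (lone G) = lone H.

Let fK : forall x, g (f x) = x := proj1 f_iso.
Let gK : forall y, f (g y) = y := proj1 (proj2 f_iso).
Let f_adj : forall x1 x2, power_adj G x1 x2 <-> power_adj H (f x1) (f x2) :=
  proj2 (proj2 f_iso).

Lemma power_iso_neq_one x : x <> lone G -> f x <> lone H.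
Proof. intros Hx E. apply Hx. rewrite <- (fK x), E, <- f_one, fK. reflexivity. Qed.

Lemma power_iso_inv_neq_one y : y <> lone H -> g y <> lone G.
Proof. intros Hy E. apply Hy. rewrite <- (gK y), E, f_one. reflexivity. Qed.

Definition loses_torsion w := w <> lone G /\ torsion G w /\ ~ torsion H (f w).

Lemma loses_torsion_adj w u :
  loses_torsion w -> power_adj G w u -> u <> lone G -> loses_torsion u.
Proof.
  intros (Hw1 & Tw & Nw) Pwu Hu1. split; [|split]; auto.
  - apply (torsion_comparable G PG w); auto. apply power_adj_comparable; auto.
  - intro T. apply Nw. apply (torsion_comparable H PH (f u)); auto.
    apply comparable_sym, power_adj_comparable; auto using power_iso_neq_one. apply f_adj, Pwu.
Qed.

Lemma loses_torsion_twin w z :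
  loses_torsion w -> twins (power_adj G) w z -> z <> lone G -> f z = zpow H (f w) (-1).
Proof.
  intros (Hw1 & _ & Nw) Tz Hz1. apply twins_nontorsion; auto.
  apply twins_power_adj_pm; auto using power_iso_neq_one.
  apply (is_iso_twins _ _ f g _ _ f_iso); auto.
Qed.

Lemma loses_torsion_twins_unique w z1 z2 :
  loses_torsion w -> twins (power_adj G) w z1 -> twins (power_adj G) w z2 ->
  z1 <> lone G -> z2 <> lone G -> z1 = z2.
Proof.
  intros Bw T1 T2 H1 H2. rewrite <- (fK z1), <- (fK z2).
  rewrite (loses_torsion_twin w z1), (loses_torsion_twin w z2); auto.
Qed.

Lemma loses_torsion_has_twin w :
  loses_torsion w -> exists z, z <> lone G /\ twins (power_adj G) w z.
Proof.
  intros (Hw1 & _ & Nw). set (y := f w).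
  assert (Hy1 : y <> lone H) by (apply power_iso_neq_one; auto).
  assert (Hyi1 : zpow H y (-1) <> lone H) by (apply zpow_inv_neq_one; auto).
  exists (g (zpow H y (-1))). split; [apply power_iso_inv_neq_one; auto|].
  rewrite <- (fK w). apply (is_iso_twins _ _ g f _ _ (is_iso_sym _ _ f g f_iso)).
  apply twins_pm_power_adj, twins_inv, nontorsion_inv_neq; auto.
Qed.

Lemma loses_torsion_order3 w : loses_torsion w -> zpow G w 3 = lone G.
Proof.
  apply (unique_twin_order3 G PG loses_torsion);
    eauto using loses_torsion_adj, loses_torsion_twins_unique, loses_torsion_has_twin.
  - intros u Bu. apply Bu.
  - intros u Bu. apply Bu.
Qed.

Lemma power_graph_iso_torsion x : torsion G x -> torsion H (f x).
Proof.
  intro Tx. destruct (classic (x = lone G)) as [->|Hx1]; [rewrite f_one; apply torsion_one; auto|].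
  apply NNPP. intro Nfx. assert (Bx : loses_torsion x) by (split; auto).
  set (y := f x) in *.
  assert (Hyk : forall k, k <> 0 -> k <> 1 -> g (zpow H y k) = zpow G x (-1)).
  { intros k Hk0 Hk1.
    assert (Hyk : zpow H y k <> y).
    { rewrite <- (zpow1 H y) at 2. intro E. apply zpow_inj in E; auto. }
    assert (Hyk1 : zpow H y k <> lone H).
    { change (lone H) with (zpow H y 0). intro E. apply zpow_inj in E; auto. }
    assert (P : power_adj G x (g (zpow H y k))).
    { apply f_adj. rewrite gK. split; [intro E; apply Hyk; rewrite <- E; reflexivity|].
      exists k. auto. }
    assert (Bu : loses_torsion (g (zpow H y k)))
      by (apply (loses_torsion_adj x); auto using power_iso_inv_neq_one).
    apply comparable_order3; auto using loses_torsion_order3, power_iso_inv_neq_one.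
    - apply power_adj_comparable; auto using power_iso_inv_neq_one.
    - intro E. apply Hyk. rewrite <- (gK (zpow H y k)), E. reflexivity. }
  assert (E : zpow H y 2 = zpow H y 4).
  { rewrite <- (gK (zpow H y 2)), <- (gK (zpow H y 4)), !Hyk; auto; lia. }
  apply zpow_inj in E; auto. lia.
Qed.
End PowerGraphIsomorphism.

Section TwinOfIdentity.
Variable L : loop.
Hypothesis PA : power_associative L.
Local Notation one := (lone L).
Local Notation zp := (zpow L).
Local Notation pm := (pm_power_adj L).
Variable e : L.
Hypothesis e_twin : twins pm one e.
Hypothesis e_twin_unique : forall u, twins pm one u -> u = e.
Hypothesis twins_unique : forall x z1 z2, pm one x -> twins pm x z1 -> twins pm x z2 -> z1 = z2.

Lemma twin_one_neq_one : e <> one.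
Proof. intro E. apply (proj1 e_twin). auto. Qed.

Lemma twin_one_sq_one : zp e 2 = one.
Proof.
  apply zpow_inv_id; auto. apply NNPP. intro Hei.
  assert (Hei1 : zp e (-1) <> one) by (apply zpow_inv_neq_one, twin_one_neq_one; auto).
  apply Hei, e_twin_unique, (twins_trans pm (pm_power_adj_sym L) one e); auto.
  apply twins_inv; auto.
Qed.

Lemma twin_one_zpow y : pm y one -> y <> e -> exists k, k <> 0 /\ e = zp y k.
Proof.
  intros Py Hye. pose proof Py as (Hy1 & _).
  destruct e_twin as (_ & _ & Hw).
  destruct (proj1 (Hw y Hy1 Hye) Py) as (_ & k & Hk & [E|E]); [exists k; auto|].
  destruct (zpow_order2 L PA e k twin_one_sq_one); congruence.
Qed.

(* With [e = x^(2j)], the power [z = x^(1+2j)] generates the same cyclic group as [x], so it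
   is a twin of [x] and must be [x^-1]; this forces [x^2 = e]. *)
Lemma twin_one_sq x : torsion L x -> x <> one -> x <> e -> zp x 2 = e.
Proof.
  intros Tx Hx1 Hxe.
  assert (P1x : pm one x) by (apply pm_power_adj_one_l; auto).
  destruct (twin_one_zpow x (pm_power_adj_sym L one x P1x) Hxe) as (k & Hk & Ek).
  assert (Hx2 : zp x 2 <> one).
  { intro E. destruct (zpow_order2 L PA x k E); pose proof twin_one_neq_one; congruence. }
  apply NNPP. intro Hx2e.
  assert (P1y : pm (zp x 2) one).
  { apply pm_power_adj_sym, pm_power_adj_one_l; auto. split; auto.
    apply (torsion_comparable L PA x); auto. exists 2. split; [lia | left; reflexivity]. }
  destruct (twin_one_zpow _ P1y Hx2e) as (j & Hj & Ej). rewrite zpow_mul in Ej by auto.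
  set (z := zp x (1 + 2 * j)).
  assert (Hxz : x <> z).
  { intro E. apply twin_one_neq_one. rewrite Ej. unfold z in E.
    rewrite <- (zpow1 L x) in E at 1. symmetry in E. apply zpow_eq_one_sub in E; auto.
    rewrite <- E. f_equal. lia. }
  assert (Hzx : x = zp z (1 + 2 * j)).
  { unfold z. rewrite zpow_mul by auto.
    replace ((1 + 2 * j) * (1 + 2 * j)) with (1 + (2 * j * 2 + 2 * j * (2 * j))) by ring.
    rewrite !zpow_add, <- (zpow_mul L PA x (2 * j) 2), <- (zpow_mul L PA x (2 * j) (2 * j)),
      <- Ej, <- (zpow_mul L PA e 2 j), twin_one_sq_one, zpow_one, !lmulx1, zpow1 by auto.
    reflexivity. }
  assert (Ez : z = zp x (-1)).
  { apply (twins_unique x); auto.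
    - apply (twins_of_mutual_powers L PA x z (1 + 2 * j) (1 + 2 * j)); auto; lia.
    - apply twins_inv; auto. intro E. apply Hx2, zpow_inv_id; auto. }
  unfold z in Ez. apply zpow_eq_one_sub in Ez; auto.
  replace (1 + 2 * j - -1) with (2 + 2 * j) in Ez by lia.
  rewrite zpow_add, <- Ej in Ez by auto.
  apply Hx2e, (lmul_cancel_r L _ _ e). rewrite Ez, <- twin_one_sq_one.
  simpl. rewrite lmul1x. reflexivity.
Qed.
End TwinOfIdentity.

Section PmGraphIsomorphism.
Variables G H : loop.
Hypothesis PG : power_associative G.
Hypothesis PH : power_associative H.
Variables (f : G -> H) (g : H -> G).
Hypothesis f_iso : is_iso (pm_power_adj G) (pm_power_adj H) f g.

Let fK : forall x, g (f x) = x := proj1 f_iso.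
Let gK : forall y, f (g y) = y := proj1 (proj2 f_iso).
Let f_adj : forall x1 x2, pm_power_adj G x1 x2 <-> pm_power_adj H (f x1) (f x2) :=
  proj2 (proj2 f_iso).

Lemma pm_iso_twins_nontorsion x z :
  ~ torsion H (f x) -> twins (pm_power_adj G) x z -> z = g (zpow H (f x) (-1)).
Proof.
  intros Nx Txz. rewrite <- (fK z). f_equal.
  apply twins_nontorsion; auto. apply (is_iso_twins _ _ f g _ _ f_iso), Txz.
Qed.

Lemma pm_iso_one_torsion : torsion H (f (lone G)).
Proof.
  apply NNPP. intro Nc. set (c := f (lone G)) in Nc.
  assert (Hgc : g c = lone G) by apply fK.
  set (e := g (zpow H c (-1))).
  assert (Te : twins (pm_power_adj G) (lone G) e).
  { rewrite <- Hgc. apply (is_iso_twins _ _ g f _ _ (is_iso_sym _ _ f g f_iso)).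
    apply twins_inv, nontorsion_inv_neq; auto. }
  assert (Eu : forall u, twins (pm_power_adj G) (lone G) u -> u = e)
    by (intros u; apply pm_iso_twins_nontorsion; auto).
  assert (Un : forall x z1 z2, pm_power_adj G (lone G) x ->
             twins (pm_power_adj G) x z1 -> twins (pm_power_adj G) x z2 -> z1 = z2).
  { intros x z1 z2 P1x T1 T2.
    assert (Nx : ~ torsion H (f x)).
    { intro Tx. apply Nc, (pm_power_adj_torsion H PH (f x)); auto.
      apply pm_power_adj_sym, f_adj, P1x. }
    rewrite (pm_iso_twins_nontorsion x z1), (pm_iso_twins_nontorsion x z2); auto. }
  pose proof (twin_one_sq_one G PG e Te Eu) as He.
  pose proof (twin_one_sq G PG e Te Eu Un) as Sq.
  assert (Hck : forall k, k <> 0 -> k <> 1 -> k <> -1 ->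
             g (zpow H c k) <> lone G /\ g (zpow H c k) <> e /\ zpow G (g (zpow H c k)) 2 = e).
  { intros k Hk0 Hk1 Hkm.
    assert (Hck1 : zpow H c k <> c).
    { rewrite <- (zpow1 H c) at 2. intro E. apply zpow_inj in E; auto. }
    assert (P : pm_power_adj G (lone G) (g (zpow H c k))).
    { apply f_adj. rewrite gK. split; [intro E; apply Hck1; rewrite <- E; reflexivity|].
      exists k. auto. }
    apply pm_power_adj_one_l in P; auto. destruct P as [Hu1 Tu].
    assert (Hue : g (zpow H c k) <> e).
    { intro E. apply (f_equal f) in E. unfold e in E. rewrite !gK in E.
      apply zpow_inj in E; auto. }
    auto. }
  assert (Hinv : forall k, k = 2 \/ k = 4 -> g (zpow H c (2 * k)) = zpow G (g (zpow H c 2)) (-1)).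
  { intros k Hk.
    destruct (Hck 2) as (Hu1 & Hue & Hu2); try lia.
    destruct (Hck (2 * k)) as (Hv1 & Hve & Hv2); try lia.
    assert (P : pm_power_adj G (g (zpow H c 2)) (g (zpow H c (2 * k)))).
    { apply f_adj. rewrite !gK. split.
      - intro E. apply zpow_inj in E; auto. lia.
      - exists k. split; [lia|]. left. rewrite zpow_mul; auto. }
    apply (comparable_sqrt_involution G PG _ _ e); auto; apply P. }
  assert (E48 : zpow H c (2 * 2) = zpow H c (2 * 4)).
  { rewrite <- (gK (zpow H c (2 * 2))), <- (gK (zpow H c (2 * 4))).
    rewrite (Hinv 2), (Hinv 4); auto. }
  apply zpow_inj in E48; auto. lia.
Qed.
End PmGraphIsomorphism.

Lemma is_iso_one_iff {G H : loop} (EG : G -> G -> Prop) (EH : H -> H -> Prop) f g x :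
  is_iso EG EH f g -> f (lone G) = lone H -> (x = lone G <-> f x = lone H).
Proof.
  intros (fK & _) f1. split; [intros ->; exact f1|].
  intro E. rewrite <- (fK x), E, <- f1, fK. reflexivity.
Qed.

Lemma pm_iso_of_power_iso (G H : loop) f g :
  power_associative G -> power_associative H ->
  is_iso (power_adj G) (power_adj H) f g -> f (lone G) = lone H ->
  is_iso (pm_power_adj G) (pm_power_adj H) f g.
Proof.
  intros PG PH Hiso f1. pose proof Hiso as (fK & gK & f_adj).
  assert (g1 : g (lone H) = lone G) by (rewrite <- f1; apply fK).
  assert (Tf : forall x, torsion G x <-> torsion H (f x)).
  { intro x. split; [apply (power_graph_iso_torsion G H PG PH f g); auto|].
    intro T. rewrite <- (fK x). apply (power_graph_iso_torsion H G PH PG g f); auto.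
    apply is_iso_sym, Hiso. }
  split; [|split]; auto. intros x1 x2.
  rewrite !pm_power_adj_iff, f_adj, !(is_iso_one_iff _ _ f g _ Hiso f1), !Tf; auto. tauto.
Qed.

Lemma power_iso_of_pm_iso (G H : loop) f g :
  is_iso (pm_power_adj G) (pm_power_adj H) f g -> f (lone G) = lone H ->
  is_iso (power_adj G) (power_adj H) f g.
Proof.
  intros Hiso f1. pose proof Hiso as (fK & gK & f_adj).
  split; [|split]; auto. intros x1 x2.
  assert (Inj : x1 = x2 <-> f x1 = f x2).
  { split; [intros ->; auto | intro E; rewrite <- (fK x1), E, fK; auto]. }
  rewrite !power_adj_iff, f_adj, !(is_iso_one_iff _ _ f g _ Hiso f1), Inj. tauto.
Qed.

Lemma power_graph_iso_fix_one (G H : loop) :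
  graph_iso (power_adj G) (power_adj H) ->
  exists f g, is_iso (power_adj G) (power_adj H) f g /\ f (lone G) = lone H.
Proof.
  intros (f & g & Hiso).
  apply (is_iso_fix_center _ _ f g); auto using power_adj_sym, power_adj_irrefl,
    power_adj_center.
  destruct (classic (f (lone G) = lone H)); auto.
  right. apply power_adj_sym, power_adj_one_l; auto.
Qed.

Lemma pm_graph_iso_fix_one (G H : loop) :
  power_associative G -> power_associative H ->
  graph_iso (pm_power_adj G) (pm_power_adj H) ->
  exists f g, is_iso (pm_power_adj G) (pm_power_adj H) f g /\ f (lone G) = lone H.
Proof.
  intros PG PH (f & g & Hiso).
  apply (is_iso_fix_center _ _ f g); auto using pm_power_adj_sym, pm_power_adj_irrefl,
    pm_power_adj_center.
  destruct (classic (f (lone G) = lone H)); auto.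
  right. apply pm_power_adj_sym, pm_power_adj_one_l; auto.
  split; auto. apply (pm_iso_one_torsion G H PG PH f g Hiso).
Qed.

Theorem mainTheorem2 (G H : loop) :
  power_associative G -> power_associative H ->
  (graph_iso (power_adj G) (power_adj H) <->
   graph_iso (pm_power_adj G) (pm_power_adj H)).
Proof.
  intros PG PH. split.
  - intro Hiso. destruct (power_graph_iso_fix_one G H Hiso) as (f & g & Hfg & f1).
    exists f, g. apply pm_iso_of_power_iso; auto.
  - intro Hiso. destruct (pm_graph_iso_fix_one G H PG PH Hiso) as (f & g & Hfg & f1).
    exists f, g. apply power_iso_of_pm_iso; auto.
Qed.
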